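(* Let $p$ be a prime and let $(\alpha,\delta)\in\mathbb{O}_p\times(\mathbb{Q}_{\ge0}\cup\{\infty\})$ be an admissible pair. Then $$\mathbb{Z}_{(p)}[X]\cap M_{(p),\alpha,\delta}=\begin{cases}p\,\mathbb{Z}_{(p)}[X], & \delta=0,\\ (p,g_\alpha(X)), & \delta>0,\end{cases}$$ where $g_\alpha\in\mathbb{Z}_{(p)}[X]$ is a monic polynomial whose reduction modulo $p$ is the minimal polynomial over $\mathbb{F}_p$ of the residue $\overline{\alpha}$ of $\alpha$ modulo $\mathbb{M}_p$.
   Context: Fix a prime $p$. $\overline{\mathbb{Q}_p}$ is an algebraic closure of $\mathbb{Q}_p$, $v_p$ the unique extension of the $p$-adic valuation, $\mathbb{C}_p$ the completion of $\overline{\mathbb{Q}_p}$, $\mathbb{O}_p=\{x\in\mathbb{C}_p:v_p(x)\ge0\}$ with maximal ideal $\mathbb{M}_p$ (its residue field is an algebraic closure of $\mathbb{F}_p=\mathbb{Z}/p\mathbb{Z}$). A pair $(\alpha,\delta)\in\mathbb{C}_p\times(\mathbb{Q}\cup\{\infty\})$ is admissible if: when $\delta\in\mathbb{Q}$, $\alpha\in\overline{\mathbb{Q}_p}$; when $\delta=\infty$, $\alpha$ is transcendental over $\mathbb{Q}$. For $\delta\in\mathbb{Q}$, $v_{p,\alpha,\delta}$ is the monomial valuation on $\mathbb{C}_p(X)$ given on polynomials by $v_{p,\alpha,\delta}(\sum_i a_i(X-\alpha)^i)=\min_i\{v_p(a_i)+i\delta\}$; for $\delta=\infty$, $v_{p,\alpha,\infty}(\varphi)=v_p(\varphi(\alpha))$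 for $\varphi\in\mathbb{Q}(X)$. $\mathbb{Z}_{(p),\alpha,\delta}=\{\varphi\in\mathbb{Q}(X):v_{p,\alpha,\delta}(\varphi)\ge0\}$ and $M_{(p),\alpha,\delta}=\{\varphi\in\mathbb{Q}(X):v_{p,\alpha,\delta}(\varphi)>0\}$ is its maximal ideal. *)

From HB Require Import structures.
From mathcomp Require Import all_boot all_order all_algebra.
Set Implicit Arguments. Unset Strict Implicit. Unset Printing Implicit Defensive.
Import Order.TTheory GRing.Theory Num.Theory.
Local Open Scope ring_scope.

Section Defs.
Variables (p : nat) (K : closedFieldType) (v : K -> option rat).

(* values in Q ∪ {∞}, None = ∞ *)
Definition vge (x : K) (N : rat) : bool :=
  match v x with None => true | Some r => N <= r end.
Definition opos (o : option rat) : bool :=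
  match o with None => true | Some r => 0 < r end.
Definition omin (a b : option rat) : option rat :=
  match a, b with
  | None, x => x | x, None => x | Some a, Some b => Some (Num.min a b) end.

Definition vpQ (q : rat) : rat :=
  (logn p `|numq q|)%:R - (logn p `|denq q|)%:R.

(* the elements of the closure of Q in K (a copy of Q_p) *)
Definition in_Qp (x : K) : Prop :=
  forall N : rat, exists q : rat, vge (x - ratr q) N.

Definition alg_Qp (x : K) : Prop :=
  exists P : {poly K}, P != 0 /\ (forall i, in_Qp P`_i) /\ root P x.

(* (K, v) is a model of (C_p, v_p): an algebraically closed, complete,
   non-archimedean valued field, valuation extending v_p on Q, in which the
   elements algebraic over the closure of Q are dense. *)
Record Cp_model : Prop := {
  v_zero : forall x, v x = None <-> x = 0;
  v_mul : forall x y r s, v x = Some r -> v y = Some s -> v (x * y) = Some (r + s);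
  v_ultra : forall x y N, vge x N -> vge y N -> vge (x + y) N;
  v_rat : forall q : rat, q != 0 -> v (ratr q) = Some (vpQ q);
  v_complete : forall u : nat -> K,
    (forall N : rat, exists n0, forall m n, (n0 <= m)%N -> (n0 <= n)%N ->
       vge (u m - u n) N) ->
    exists l, forall N : rat, exists n0, forall n, (n0 <= n)%N -> vge (u n - l) N;
  v_dense : forall x (N : rat), exists y, alg_Qp y /\ vge (x - y) N
}.

(* admissible pairs (delta = None means delta = ∞) *)
Definition admissible (alpha : K) (delta : option rat) : Prop :=
  match delta with
  | Some _ => alg_Qp alpha
  | None => forall f : {poly rat}, (map_poly ratr f).[alpha] = 0 -> f = 0
  end.

Definition monoval (alpha : K) (delta : option rat) (f : {poly rat}) : option rat :=
  match delta with
  | Some d =>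
      let F := (map_poly ratr f : {poly K}) \Po ('X + alpha%:P) in
      foldr (fun i acc =>
               omin (match v F`_i with None => None
                     | Some r => Some (r + i%:R * d) end) acc)
            None (iota 0 (size F))
  | None => v (map_poly ratr f : {poly K}).[alpha]
  end.

Definition Zp_loc (q : rat) : bool := ~~ (p %| `|denq q|)%N.
Definition polyZp (f : {poly rat}) : bool := all Zp_loc f.

Definition redp (q : rat) : 'F_p := (numq q)%:~R / (denq q)%:~R.

(* h(alpha-bar) = 0 in the residue field *)
Definition root_res (alpha : K) (h : {poly 'F_p}) : bool :=
  opos (v (map_poly (fun c : 'F_p => ((nat_of_ord c)%:R : K)) h).[alpha]).

Definition minpoly_res (alpha : K) (h : {poly 'F_p}) : Prop :=
  h \is monic /\ root_res alpha h /\
  forall h' : {poly 'F_p}, h' != 0 -> root_res alpha h' -> (size h <= size h')%N.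

Definition g_spec (alpha : K) (g : {poly rat}) : Prop :=
  polyZp g /\ g \is monic /\ minpoly_res alpha (map_poly redp g).

Definition p_ideal (f : {poly rat}) : Prop :=
  exists h, polyZp h /\ f = (p%:R : rat) *: h.
Definition pg_ideal (g f : {poly rat}) : Prop :=
  exists h1 h2, polyZp h1 /\ polyZp h2 /\ f = (p%:R : rat) *: h1 + g * h2.

End Defs.

(* For f in Z_(p)[X] and alpha in O_p, the Taylor coefficients of f at alpha
   are integral.  When delta > 0 they are weighted by i * delta > 0 for i >= 1,
   so v_{alpha,delta}(f) > 0 only asks f(alpha) to lie in M_p; when delta = 0
   it asks all Taylor coefficients, equivalently (the shift by alpha being
   invertible over O_p) all coefficients of f, to lie in M_p, i.e. f to lie in
   p Z_(p)[X].  Reducing modulo M_p, f(alpha) is in M_p iff the reduction of f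
   vanishes at the residue of alpha; these reductions form the ideal of F_p[X]
   generated by the minimal polynomial of that residue, whence (p, g_alpha).
   The residue of alpha is algebraic over F_p: by density some y algebraic over
   Q_p has v(alpha - y) >= 1, and normalising a polynomial of y to integral
   coefficients, one of them a unit, then rounding them to rationals yields a
   nonzero polynomial over F_p that kills the residue. *)

From HB Require Import structures.
From mathcomp Require Import all_boot all_order all_algebra.
From mathcomp Require Import ring lra.
From Stdlib Require Import Classical.
Set Implicit Arguments. Unset Strict Implicit. Unset Printing Implicit Defensive.
Import Order.TTheory GRing.Theory Num.Theory.
Local Open Scope ring_scope.

Lemma ex_minimal_measure (T : Type) (P : T -> Prop) (m : T -> nat) :
  (exists x, P x) -> exists x, P x /\ forall y, P y -> (m x <= m y)%N.
Proof.
case=> x0 Px0.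
suff: forall n x, (m x <= n)%N -> P x ->
    exists x, P x /\ forall y, P y -> (m x <= m y)%N.
  exact: (fun H => H _ x0 (leqnn _) Px0).
elim=> [|n IH] x mx Px.
  by exists x; split=> // y _; move: mx; rewrite leqn0 => /eqP ->.
case: (classic (exists2 y, P y & (m y < m x)%N)) => [[y Py lt_yx]|nlt].
  by apply: (IH y) => //; rewrite -ltnS (leq_trans lt_yx).
exists x; split=> // y Py; rewrite leqNgt; apply/negP => lt_yx.
by apply: nlt; exists y.
Qed.

Section RatEmbedding.
Variable F : fieldType.
Hypothesis intr_neq0 : forall z : int, z != 0 -> z%:~R != 0 :> F.

Lemma ratr_frac (a b : int) : b != 0 ->
  ratr (a%:~R / b%:~R : rat) = a%:~R / b%:~R :> F.
Proof.
move=> b0; set x : rat := _ / _.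
have xb : x * b%:~R = a%:~R by rewrite divfK ?intr_eq0.
have cross : numq x * b = a * denq x.
  by apply: (@intr_inj rat); rewrite !intrM numqE -xb; ring.
apply/eqP; rewrite /ratr eqr_div ?intr_neq0 ?denq_neq0 //.
by rewrite -!intrM cross.
Qed.

Lemma char0_ratr_zmod_morphism : zmod_morphism (@ratr F).
Proof.
move=> x y; have dx := denq_neq0 x; have dy := denq_neq0 y.
have -> : x - y =
    (numq x * denq y - numq y * denq x)%:~R / (denq x * denq y)%:~R.
  rewrite -{1}[x]divq_num_den -{1}[y]divq_num_den !(intrM, intrB).
  by field; rewrite !intr_eq0 dx dy.
rewrite ratr_frac ?mulf_neq0 // /ratr !(intrM, intrB); field.
by rewrite !intr_neq0.
Qed.

Lemma char0_ratr_monoid_morphism : monoid_morphism (@ratr F).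
Proof.
split=> [|x y]; first by rewrite /ratr divr1.
have dx := denq_neq0 x; have dy := denq_neq0 y.
have -> : x * y = (numq x * numq y)%:~R / (denq x * denq y)%:~R.
  rewrite -{1}[x]divq_num_den -{1}[y]divq_num_den !intrM.
  by field; rewrite !intr_eq0 dx dy.
rewrite ratr_frac ?mulf_neq0 // /ratr !intrM; field.
by rewrite !intr_neq0.
Qed.

End RatEmbedding.

Section PadicField.
Variables (p : nat) (K : closedFieldType) (v : K -> option rat).
Hypothesis p_prime : prime p.
Hypothesis Kv : Cp_model p v.

Lemma v0 : v 0 = None. Proof. exact/(v_zero Kv). Qed.

Lemma v_Some x : x != 0 -> exists r, v x = Some r.
Proof.
case vx: (v x) => [r|]; first by exists r.
by move/(v_zero Kv): vx => ->; rewrite eqxx.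
Qed.

Lemma intr_neq0 (z : int) : z != 0 -> z%:~R != 0 :> K.
Proof.
rewrite -(intr_eq0 rat) => /(v_rat Kv); rewrite ratr_int => vz.
by apply/eqP => z0; rewrite z0 v0 in vz.
Qed.

(* The library makes [ratr] a ring morphism only into number fields, and the
   canonical key [ratr] is taken; [ratK] carries the morphism structure for
   [K], which has characteristic 0 by [intr_neq0]. *)
Definition ratK : rat -> K := ratr.

HB.instance Definition _ := GRing.isZmodMorphism.Build rat K ratK
  (char0_ratr_zmod_morphism intr_neq0).
HB.instance Definition _ := GRing.isMonoidMorphism.Build rat K ratK
  (char0_ratr_monoid_morphism intr_neq0).

Lemma v1 : v 1 = Some 0.
Proof.
by have := v_rat Kv (oner_neq0 rat); rewrite (rmorph1 ratK) /vpQ subrr.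
Qed.

Lemma vN1 : v (-1) = Some 0.
Proof.
have [|r vr] := @v_Some (-1); first by rewrite oppr_eq0 oner_eq0.
have := v_mul Kv vr vr; rewrite mulrNN mulr1 v1 vr => -[r0].
by congr Some; lra.
Qed.

Lemma vN x : v (- x) = v x.
Proof.
have [->|x0] := eqVneq x 0; first by rewrite oppr0.
have [r vr] := v_Some x0.
by rewrite -mulN1r (v_mul Kv vN1 vr) add0r.
Qed.

Lemma vV x r : v x = Some r -> v x^-1 = Some (- r).
Proof.
move=> vx; have x0 : x != 0 by apply/eqP => x0; rewrite x0 v0 in vx.
have [s vs] := v_Some (invr_neq0 x0).
have := v_mul Kv vx vs; rewrite mulfV // v1 vs => -[rs].
by congr Some; lra.
Qed.

Lemma vge_Some x r : v x = Some r -> vge v x r.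
Proof. by rewrite /vge => ->. Qed.

Lemma vge0 N : vge v 0 N.
Proof. by rewrite /vge v0. Qed.

Lemma vge_le x N N' : vge v x N -> N' <= N -> vge v x N'.
Proof. by rewrite /vge; case: (v x) => // r Nr N'N; apply: le_trans N'N Nr. Qed.

Lemma vgeN x N : vge v (- x) N = vge v x N.
Proof. by rewrite /vge vN. Qed.

Lemma vgeB x y N : vge v x N -> vge v y N -> vge v (x - y) N.
Proof. by rewrite -(vgeN y); apply: (v_ultra Kv). Qed.

Lemma vgeM x y N N' : vge v x N -> vge v y N' -> vge v (x * y) (N + N').
Proof.
have [-> _ _|x0] := eqVneq x 0; first by rewrite mul0r vge0.
have [-> _ _|y0] := eqVneq y 0; first by rewrite mulr0 vge0.
have [r vx] := v_Some x0; have [s vy] := v_Some y0.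
by rewrite /vge (v_mul Kv vx vy) vx vy; apply: lerD.
Qed.

Lemma v_perturb c x m : v c = Some m -> vge v (c - x) (m + 1) -> v x = Some m.
Proof.
move=> vc vcx; have m_lt : m < m + 1 by lra.
have x0 : x != 0.
  by apply: contraTneq vcx => ->; rewrite subr0 /vge vc -ltNge.
have [t vx] := v_Some x0; rewrite vx; congr Some.
have vxm : m <= t.
  have := vgeB (vge_Some vc) (vge_le vcx (ltW m_lt)).
  by rewrite opprB addrCA subrr addr0 /vge vx.
apply/eqP; rewrite eq_le vxm andbT leNgt; apply/negP => lt_mt.
have min1 : Num.min (m + 1) t <= m + 1 by rewrite ge_min lexx.
have min2 : Num.min (m + 1) t <= t by rewrite ge_min lexx orbT.
have := v_ultra Kv (vge_le vcx min1) (vge_le (vge_Some vx) min2).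
by rewrite subrK /vge vc ge_min !leNgt m_lt lt_mt.
Qed.

Definition Op (x : K) : bool := vge v x 0.
Definition Mp (x : K) : bool := opos (v x).

Lemma MpP x : reflect (exists2 N, 0 < N & vge v x N) (Mp x).
Proof.
rewrite /Mp /vge; case: (v x) => [r|] /=; last by constructor; exists 1.
apply: (iffP idP) => [r_gt0|[N N_gt0 Nr]]; first by exists r.
exact: lt_le_trans Nr.
Qed.

Lemma Op0 : Op 0. Proof. exact: vge0. Qed.
Lemma Op1 : Op 1. Proof. by rewrite /Op /vge v1. Qed.
Lemma OpB x y : Op x -> Op y -> Op (x - y). Proof. exact: vgeB. Qed.
Lemma OpD x y : Op x -> Op y -> Op (x + y). Proof. exact: (v_ultra Kv). Qed.
Lemma OpM x y : Op x -> Op y -> Op (x * y).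
Proof. by move=> Ox Oy; have := vgeM Ox Oy; rewrite addr0. Qed.
Lemma OpX x n : Op x -> Op (x ^+ n).
Proof. by move=> Ox; elim: n => [|n IH]; rewrite ?Op1 // exprS OpM. Qed.
Lemma Op_sum I r (P : pred I) (F : I -> K) :
  (forall i, P i -> Op (F i)) -> Op (\sum_(i <- r | P i) F i).
Proof. by move=> OF; apply: (big_ind Op) => //; [apply: Op0 | apply: OpD]. Qed.

Lemma Mp0 : Mp 0. Proof. by rewrite /Mp v0. Qed.
Lemma Mp_Op x : Mp x -> Op x.
Proof. by case/MpP=> N N_gt0 xN; apply: vge_le xN (ltW N_gt0). Qed.
Lemma MpN x : Mp (- x) = Mp x. Proof. by rewrite /Mp vN. Qed.
Lemma MpD x y : Mp x -> Mp y -> Mp (x + y).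
Proof.
case/MpP=> N N_gt0 xN /MpP[N' N'_gt0 yN']; apply/MpP.
exists (Num.min N N'); first by rewrite lt_min N_gt0.
by apply: (v_ultra Kv); [apply: vge_le xN _ | apply: vge_le yN' _];
  rewrite ge_min lexx ?orbT.
Qed.
Lemma MpB x y : Mp x -> Mp y -> Mp (x - y).
Proof. by rewrite -(MpN y); apply: MpD. Qed.
Lemma MpMl x y : Mp x -> Op y -> Mp (x * y).
Proof.
case/MpP=> N N_gt0 xN Oy; apply/MpP; exists N => //.
by have := vgeM xN Oy; rewrite addr0.
Qed.
Lemma MpMr x y : Op x -> Mp y -> Mp (x * y).
Proof. by rewrite mulrC => Ox My; apply: MpMl. Qed.
Lemma Mp_sum I r (P : pred I) (F : I -> K) :
  (forall i, P i -> Mp (F i)) -> Mp (\sum_(i <- r | P i) F i).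
Proof. by move=> MF; apply: (big_ind Mp) => //; [apply: Mp0 | apply: MpD]. Qed.

Lemma Mp_congr x y : Mp (x - y) -> Mp x = Mp y.
Proof.
move=> Mxy; apply/idP/idP => [Mx|My]; last by rewrite -(subrK y x) MpD.
by rewrite -[y](subKr x) MpB.
Qed.

Lemma Mp_subX a b n : Op a -> Op b -> Mp (a - b) -> Mp (a ^+ n - b ^+ n).
Proof.
move=> Oa Ob Mab; elim: n => [|n IH]; first by rewrite subrr Mp0.
have -> : a ^+ n.+1 - b ^+ n.+1 = a * (a ^+ n - b ^+ n) + (a - b) * b ^+ n.
  by rewrite !exprS; ring.
by apply: MpD; [apply: MpMr | apply: MpMl (OpX _ Ob)].
Qed.

Lemma v_nat n : (0 < n)%N -> v n%:R = Some (logn p n)%:R.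
Proof.
move=> n_gt0; have := v_rat Kv (_ : n%:R != 0 :> rat).
rewrite pnatr_eq0 -lt0n n_gt0 ratr_nat => /(_ isT) ->; congr Some.
by rewrite /vpQ -[n%:R]/(n%:Z)%:~R numq_int denq_int logn1 subr0.
Qed.

Lemma Op_nat n : Op n%:R.
Proof. by case: n => [|n]; rewrite ?Op0 // /Op /vge v_nat. Qed.

Lemma Mp_nat n : Mp n%:R = (p %| n)%N.
Proof.
case: n => [|n]; first by rewrite Mp0 dvdn0.
by rewrite /Mp v_nat //= ltr0n logn_gt0 mem_primes p_prime.
Qed.

Lemma Mp_p : Mp p%:R. Proof. by rewrite Mp_nat. Qed.

Lemma v_p : v p%:R = Some 1.
Proof. by rewrite v_nat ?prime_gt0 // logn_prime // eqxx. Qed.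

Lemma v_int_unit (z : int) : ~~ (p %| `|z|)%N -> v z%:~R = Some 0.
Proof.
have v_nat_unit n : ~~ (p %| n)%N -> v n%:R = Some 0.
  move=> pNn; rewrite v_nat ?logn_coprime ?prime_coprime //.
  by rewrite lt0n; apply: contraNneq pNn => ->; rewrite dvdn0.
by case: z => n pNn; rewrite ?NegzE ?mulrNz ?vN v_nat_unit.
Qed.

Lemma Zp_loc0 : Zp_loc p 0.
Proof. by rewrite /Zp_loc /= dvdn1 neq_ltn prime_gt1 ?orbT. Qed.

Lemma Zp_loc_Op q : Zp_loc p q = Op (ratK q).
Proof.
have [->|q0] := eqVneq q 0; first by rewrite rmorph0 Op0 Zp_loc0.
rewrite /Op /vge (v_rat Kv q0) /vpQ subr_ge0 ler_nat /Zp_loc.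
have [pd|pNd] := boolP (p %| `|denq q|)%N; last first.
  by rewrite logn_coprime ?prime_coprime.
have pNn : ~~ (p %| `|numq q|)%N.
  apply: contraL pd => pn; rewrite -prime_coprime //.
  exact: coprime_dvdl pn (coprime_num_den q).
rewrite (@logn_coprime p `|numq q|) ?prime_coprime // leqn0.
apply/esym/negbTE.
by rewrite -lt0n logn_gt0 mem_primes p_prime absz_gt0 denq_neq0 pd.
Qed.

Lemma Zp_loc_divp q : Mp (ratK q) -> Zp_loc p (q / p%:R).
Proof.
have [->|q0] := eqVneq q 0; first by rewrite mul0r Zp_loc0.
rewrite /Mp (v_rat Kv q0) /= => vq_gt0.
have vq_ge1 : 1 <= vpQ p q.
  move: vq_gt0; rewrite /vpQ subr_gt0 ltr_nat => lt_dn.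
  by rewrite -(natrB _ (ltnW lt_dn)) ler1n subn_gt0.
rewrite Zp_loc_Op (fmorph_div ratK) (rmorph_nat ratK).
have := vgeM (vge_Some (v_rat Kv q0)) (vge_Some (vV v_p)).
by move/vge_le; apply; rewrite subr_ge0.
Qed.

Definition liftF (c : 'F_p) : K := (c : nat)%:R.
Definition is_res (c : 'F_p) (x : K) : bool := Mp (x - liftF c).

Lemma is_res0 x : is_res 0 x = Mp x.
Proof. by rewrite /is_res /liftF subr0. Qed.

Lemma is_res_liftF c : is_res c (liftF c).
Proof. by rewrite /is_res subrr Mp0. Qed.

Lemma is_res_Op c x : is_res c x -> Op x.
Proof.
by move/Mp_Op => Oxc; rewrite -(subrK (liftF c) x); apply: OpD (Op_nat _).
Qed.

Lemma is_resB c x y : is_res c x -> is_res c y -> Mp (x - y).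
Proof.
move=> cx cy; rewrite -(subrKA (liftF c)); apply: MpD cx _.
by rewrite -opprB MpN.
Qed.

Lemma is_res_natE n x : is_res n%:R x = Mp (x - n%:R).
Proof.
apply: Mp_congr.
have -> : x - liftF n%:R - (x - n%:R) = n%:R - liftF n%:R by ring.
rewrite /liftF (val_Fp_nat p_prime) {1}(divn_eq n p) natrD addrK natrM.
by apply: MpMr; rewrite ?Op_nat ?Mp_nat.
Qed.

Lemma is_resD c d x y : is_res c x -> is_res d y -> is_res (c + d) (x + y).
Proof.
move=> cx dy; rewrite -[c]natr_Zp -[d]natr_Zp -natrD is_res_natE natrD.
have -> : x + y - (c%:R + d%:R) = (x - liftF c) + (y - liftF d) by ring.
exact: MpD.
Qed.

Lemma is_resM c d x y : is_res c x -> is_res d y -> is_res (c * d) (x * y).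
Proof.
move=> cx dy; rewrite -[c]natr_Zp -[d]natr_Zp -natrM is_res_natE natrM.
have -> : x * y - c%:R * d%:R = (x - liftF c) * y + liftF c * (y - liftF d).
  by rewrite /liftF; ring.
by apply: MpD; [apply: MpMl (is_res_Op dy) | apply: MpMr (Op_nat _) dy].
Qed.

Lemma is_resN c x : is_res c x -> is_res (- c) (- x).
Proof.
move=> cx; have := is_resD (is_res_liftF (- c)) cx; rewrite addNr is_res0.
by rewrite /is_res -opprD MpN addrC.
Qed.

Lemma is_res_int (z : int) : is_res z%:~R z%:~R.
Proof.
case: z => n; rewrite ?NegzE ?mulrNz; [|apply: is_resN];
  by rewrite -!pmulrn is_res_natE subrr Mp0.
Qed.

Lemma is_res_redp q : Zp_loc p q -> is_res (redp p q) (ratK q).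
Proof.
move=> pNd; set c := redp p q; set d : K := (denq q)%:~R.
have dF : (denq q)%:~R != 0 :> 'F_p by rewrite -(dvdz_pcharf (pchar_Fp p_prime)).
have cd : c * (denq q)%:~R = (numq q)%:~R by rewrite /c /redp divfK.
have := is_resM (is_res_liftF c) (is_res_int (denq q)); rewrite cd => cd_res.
have Od : Op d^-1 by have := vge_Some (vV (v_int_unit pNd)); rewrite oppr0.
rewrite /is_res.
have -> : ratK q - liftF c = - ((liftF c * d - (numq q)%:~R) * d^-1).
  by rewrite /ratK /ratr mulrBl mulfK ?intr_neq0 ?denq_neq0 // opprB.
by rewrite MpN; apply: MpMl (is_resB cd_res (is_res_int _)) Od.
Qed.

Definition polyOp (P : {poly K}) := forall i, Op P`_i.
Definition polyMp (P : {poly K}) := forall i, Mp P`_i.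
Definition poly_res (h : {poly 'F_p}) (P : {poly K}) :=
  forall i, is_res h`_i P`_i.

Lemma polyMp_Op P : polyMp P -> polyOp P.
Proof. by move=> MP i; apply: Mp_Op. Qed.

Lemma polyOpC c : Op c -> polyOp c%:P.
Proof. by move=> Oc i; rewrite coefC; case: (i == 0)%N; rewrite ?Op0. Qed.

Lemma polyOpX : polyOp 'X.
Proof. by move=> i; rewrite coefX; case: (i == 1)%N; rewrite ?Op0 ?Op1. Qed.

Lemma polyOpD P Q : polyOp P -> polyOp Q -> polyOp (P + Q).
Proof. by move=> OP OQ i; rewrite coefD OpD. Qed.

Lemma polyOpB P Q : polyOp P -> polyOp Q -> polyOp (P - Q).
Proof. by move=> OP OQ i; rewrite coefB OpB. Qed.

Lemma polyOpZ c P : Op c -> polyOp P -> polyOp (c *: P).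
Proof. by move=> Oc OP i; rewrite coefZ OpM. Qed.

Lemma polyMpZ c P : Mp c -> polyOp P -> polyMp (c *: P).
Proof. by move=> Mc OP i; rewrite coefZ MpMl. Qed.

Lemma polyOpM P Q : polyOp P -> polyOp Q -> polyOp (P * Q).
Proof. by move=> OP OQ i; rewrite coefM Op_sum // => j _; rewrite OpM. Qed.

Lemma polyOpXn P n : polyOp P -> polyOp (P ^+ n).
Proof.
move=> OP; elim: n => [|n IH]; last by rewrite exprS; apply: polyOpM.
by rewrite expr0 -polyC1; apply/polyOpC/Op1.
Qed.

Lemma polyOp_comp P Q : polyOp P -> polyOp Q -> polyOp (P \Po Q).
Proof.
move=> OP OQ i; rewrite comp_polyE coef_sum Op_sum // => j _.
by rewrite coefZ OpM ?polyOpXn.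
Qed.

Lemma polyMp_comp P Q : polyMp P -> polyOp Q -> polyMp (P \Po Q).
Proof.
move=> MP OQ i; rewrite comp_polyE coef_sum Mp_sum // => j _.
by rewrite coefZ MpMl ?polyOpXn.
Qed.

Lemma polyOp_horner P x : polyOp P -> Op x -> Op P.[x].
Proof.
by move=> OP Ox; rewrite horner_coef Op_sum // => i _; rewrite OpM ?OpX.
Qed.

Lemma polyMp_horner P x : polyMp P -> Op x -> Mp P.[x].
Proof.
by move=> MP Ox; rewrite horner_coef Mp_sum // => i _; rewrite MpMl ?OpX.
Qed.

Lemma polyOp_hornerB P x y :
  polyOp P -> Op x -> Op y -> Mp (x - y) -> Mp (P.[x] - P.[y]).
Proof.
move=> OP Ox Oy Mxy; rewrite !horner_coef -sumrB Mp_sum // => i _.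
by rewrite -mulrBr MpMr ?Mp_subX.
Qed.

Lemma poly_res_Op h P : poly_res h P -> polyOp P.
Proof. by move=> hP i; apply: is_res_Op (hP i). Qed.

Lemma poly_resB h h' P P' :
  poly_res h P -> poly_res h' P' -> poly_res (h - h') (P - P').
Proof. by move=> hP hP' i; rewrite !coefB is_resD ?is_resN. Qed.

Lemma poly_resM h h' P P' :
  poly_res h P -> poly_res h' P' -> poly_res (h * h') (P * P').
Proof.
move=> hP hP' i; rewrite !coefM.
elim/big_rec2: _ => [|j c x _ cx]; first by rewrite is_res0 Mp0.
by rewrite is_resD ?is_resM.
Qed.

Lemma poly_resZ c x h P :
  is_res c x -> poly_res h P -> poly_res (c *: h) (x *: P).
Proof. by move=> cx hP i; rewrite !coefZ is_resM. Qed.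

Lemma poly_res_same h P P' : poly_res h P -> poly_res h P' -> polyMp (P - P').
Proof. by move=> hP hP' i; rewrite coefB (is_resB (hP i)). Qed.

Lemma poly_res0 P : poly_res 0 P -> polyMp P.
Proof. by move=> hP i; have := hP i; rewrite coef0 is_res0. Qed.

Lemma poly_res_liftF h : poly_res h (map_poly liftF h).
Proof. by move=> i; rewrite coef_map_id0 ?is_res_liftF. Qed.

Lemma root_resE alpha h P : Op alpha -> poly_res h P ->
  root_res v alpha h = Mp P.[alpha].
Proof.
move=> Oa hP; apply: Mp_congr; rewrite -hornerN -hornerD polyMp_horner //.
exact: poly_res_same (poly_res_liftF h) hP.
Qed.

Lemma polyZpP (f : {poly rat}) : reflect (forall i, Zp_loc p f`_i) (polyZp p f).
Proof.
apply: (iffP (all_nthP 0)) => Zf i //.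
by have [/Zf //|ge] := ltnP i (size f); rewrite nth_default ?Zp_loc0.
Qed.

Lemma polyZp_Op (f : {poly rat}) : polyZp p f <-> polyOp (map_poly ratK f).
Proof.
split=> [/polyZpP Zf i | Of]; first by rewrite coef_map -Zp_loc_Op.
by apply/polyZpP => i; rewrite Zp_loc_Op -coef_map.
Qed.

Lemma redp_int (z : int) : redp p z%:~R = z%:~R.
Proof. by rewrite /redp numq_int denq_int divr1. Qed.

Lemma redp0 : redp p 0 = 0. Proof. exact: (redp_int 0). Qed.

Lemma poly_res_redp (f : {poly rat}) :
  polyZp p f -> poly_res (map_poly (redp p) f) (map_poly ratK f).
Proof.
by move/polyZpP=> Zf i; rewrite coef_map coef_map_id0 ?redp0 ?is_res_redp.
Qed.

Definition liftQ (h : {poly 'F_p}) : {poly rat} :=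
  map_poly (fun c : 'F_p => (c : nat)%:R) h.

Lemma poly_res_liftQ h : poly_res h (map_poly ratK (liftQ h)).
Proof.
by move=> i; rewrite coef_map coef_map_id0 //= (rmorph_nat ratK) is_res_liftF.
Qed.

Lemma polyZp_liftQ h : polyZp p (liftQ h).
Proof. exact/polyZp_Op/(poly_res_Op (poly_res_liftQ h)). Qed.

Lemma redp_liftQ h : map_poly (redp p) (liftQ h) = h.
Proof.
rewrite -map_poly_comp_id0 ?redp0 //.
rewrite (eq_map_poly (g := id)) ?map_poly_id // => c /=.
by rewrite -[c%:R]/(c%:Z)%:~R redp_int -pmulrn natr_Zp.
Qed.

Lemma liftQ_monic h : h \is monic -> liftQ h \is monic.
Proof.
have val1 : nat_of_ord (1 : 'F_p) = 1%N.
  by move: (val_Fp_nat p_prime 1); rewrite mulr1n modn_small ?prime_gt1.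
by move/monicP=> h1; apply/monicP; rewrite lead_coef_map_id0 ?h1 ?val1.
Qed.

Lemma root_resB_mul alpha (f h q : {poly 'F_p}) : Op alpha ->
  root_res v alpha f -> root_res v alpha h -> root_res v alpha (f - q * h).
Proof.
move=> Oa rf rh; rewrite (root_resE Oa (poly_resB (poly_res_liftF f)
  (poly_resM (poly_res_liftF q) (poly_res_liftF h)))).
rewrite hornerD hornerN hornerM; apply: MpB rf (MpMr _ rh).
by apply: polyOp_horner (poly_res_Op (poly_res_liftF q)) Oa.
Qed.

Lemma minpoly_res_dvdp alpha (h f : {poly 'F_p}) : Op alpha ->
  minpoly_res v alpha h -> root_res v alpha f -> h %| f.
Proof.
move=> Oa [h_monic [rh h_min]] rf; apply/modp_eq0P/eqP; apply: contraT => r_nz.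
have r_root : root_res v alpha (f %% h).
  have -> : f %% h = f - f %/ h * h.
    by rewrite {2}(divp_eq f h) addrAC subrr add0r.
  exact: root_resB_mul.
by have := h_min _ r_nz r_root; rewrite leqNgt ltn_modp monic_neq0.
Qed.

Lemma p_idealP f : p_ideal p f <-> polyZp p f /\ polyMp (map_poly ratK f).
Proof.
have p_neq0 : p%:R != 0 :> rat by rewrite pnatr_eq0 -lt0n prime_gt0.
split=> [[h [/polyZp_Op Oh ->]] | [_ Mf]].
  have pK : map_poly ratK (p%:R *: h) = p%:R *: map_poly ratK h.
    by rewrite map_polyZ (rmorph_nat ratK).
  split; first apply/polyZp_Op; rewrite pK.
    exact: polyOpZ (Op_nat _) Oh.
  exact: polyMpZ Mp_p Oh.
exists (p%:R^-1 *: f); rewrite scalerA mulfV ?scale1r //; split=> //.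
by apply/polyZpP => i; rewrite coefZ mulrC Zp_loc_divp // -coef_map.
Qed.

Lemma pg_idealP alpha g f : Op alpha -> g_spec p v alpha g ->
  pg_ideal p g f <-> polyZp p f /\ Mp (map_poly ratK f).[alpha].
Proof.
move=> Oa [Zg [_ gb_min]]; have [_ [gb_root _]] := gb_min.
have Mg : Mp (map_poly ratK g).[alpha].
  by rewrite -(root_resE Oa (poly_res_redp Zg)).
have Og := iffLR (polyZp_Op g) Zg.
split=> [[h1 [h2 [/polyZp_Op Oh1 [/polyZp_Op Oh2 ->]]]] | [Zf Mf]].
  have fK : map_poly ratK (p%:R *: h1 + g * h2) =
      p%:R *: map_poly ratK h1 + map_poly ratK g * map_poly ratK h2.
    by rewrite rmorphD rmorphM /= map_polyZ (rmorph_nat ratK).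
  split; first apply/polyZp_Op; rewrite fK.
    by apply: polyOpD; [apply: polyOpZ (Op_nat _) Oh1 | apply: polyOpM].
  rewrite hornerD hornerZ hornerM.
  by apply: MpD; rewrite MpMl ?Mp_p ?polyOp_horner.
have fb_root : root_res v alpha (map_poly (redp p) f).
  by rewrite (root_resE Oa (poly_res_redp Zf)).
have /dvdpP[q fbE] := minpoly_res_dvdp Oa gb_min fb_root.
have [h1 [Zh1 DE]] : p_ideal p (f - liftQ q * g).
  apply/p_idealP.
  have DK : map_poly ratK (f - liftQ q * g) =
      map_poly ratK f - map_poly ratK (liftQ q) * map_poly ratK g.
    by rewrite rmorphB rmorphM.
  split; first apply/polyZp_Op; rewrite DK.
    apply: polyOpB; first exact/polyZp_Op.
    by apply: polyOpM _ Og; apply/polyZp_Op/polyZp_liftQ.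
  apply: poly_res0; rewrite -(subrr (map_poly (redp p) f)) {2}fbE.
  apply: poly_resB (poly_res_redp Zf) _.
  exact: poly_resM (poly_res_liftQ q) (poly_res_redp Zg).
exists h1, (liftQ q); do !split=> //; first exact: polyZp_liftQ.
by rewrite -DE mulrC subrK.
Qed.

Definition taylor alpha (f : {poly rat}) : {poly K} :=
  map_poly ratK f \Po ('X + alpha%:P).

Lemma monovalE alpha d f : opos (monoval v alpha (Some d) f) =
  all (fun i => if v (taylor alpha f)`_i is Some r
                then 0 < r + i%:R * d else true)
    (iota 0 (size (taylor alpha f))).
Proof.
rewrite /monoval -/(taylor alpha f); elim: (iota _ _) => //= i s <-.
by case: (v _) => [r|]; case: foldr => [s'|] //=; rewrite ?andbT ?lt_min.
Qed.

Lemma monoval0_pos alpha f :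
  opos (monoval v alpha (Some 0) f) <-> polyMp (taylor alpha f).
Proof.
rewrite monovalE; split=> [/allP Mt i | Mt]; last first.
  apply/allP => i _; have := Mt i.
  by rewrite /Mp mulr0; case: (v _) => //= r; rewrite addr0.
have [lt_i|ge_i] := ltnP i (size (taylor alpha f)); last first.
  by rewrite nth_default ?Mp0.
have := Mt i; rewrite mem_iota lt_i /Mp mulr0.
by case: (v _) => //= r; rewrite addr0 => ->.
Qed.

Lemma monoval_pos alpha d f : Op alpha -> 0 < d -> polyZp p f ->
  opos (monoval v alpha (Some d) f) = Mp (map_poly ratK f).[alpha].
Proof.
move=> Oa d_gt0 /polyZp_Op Of.
have Ot : polyOp (taylor alpha f).
  by apply: polyOp_comp Of (polyOpD polyOpX (polyOpC Oa)).
have <- : (taylor alpha f)`_0 = (map_poly ratK f).[alpha].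
  by rewrite -horner_coef0 horner_comp !hornerE.
rewrite monovalE; have [t0|t_gt0] := posnP (size (taylor alpha f)).
  by rewrite t0 nth_default ?t0 ?Mp0.
have high_coefs : all (fun i => if v (taylor alpha f)`_i is Some r
    then 0 < r + i%:R * d else true) (iota 1 (size (taylor alpha f)).-1).
  apply/allP => i; rewrite mem_iota => /andP[i_gt0 _].
  have := Ot i; rewrite /Op /vge; case: (v _) => //= r r_ge0.
  by rewrite ltr_wpDl // mulr_gt0 // ltr0n.
rewrite -(prednK t_gt0) /= high_coefs andbT mul0r /Mp.
by case: (v _) => //= r; rewrite addr0.
Qed.

Lemma polyMp_taylor alpha f :
  Op alpha -> polyMp (taylor alpha f) <-> polyMp (map_poly ratK f).
Proof.
move=> Oa; split=> Mf; last exact: polyMp_comp Mf (polyOpD polyOpX (polyOpC Oa)).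
have <- : taylor alpha f \Po ('X - alpha%:P) = map_poly ratK f.
  by rewrite -comp_polyA comp_polyD comp_polyX comp_polyC subrK comp_polyXr.
exact: polyMp_comp Mf (polyOpB polyOpX (polyOpC Oa)).
Qed.

Lemma exists_min_v_coef (P : {poly K}) : P != 0 ->
  exists (j : 'I_(size P)) m, v P`_j = Some m /\ forall i, vge v P`_i m.
Proof.
move=> P_nz; pose w (i : 'I_(size P)) := odflt 0 (v P`_i).
have sP : ((size P).-1 < size P)%N by rewrite prednK ?size_poly_gt0.
have lead_nz : P`_(Ordinal sP) != 0 by rewrite -lead_coefE lead_coef_eq0.
case: (@arg_minP _ _ _ (Ordinal sP) (fun i => P`_i != 0) w lead_nz) => j Pj jmin.
have [m vj] := v_Some Pj.
exists j, m; split=> // i; have [->|Pi] := eqVneq P`_i 0; first exact: vge0.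
have i_lt : (i < size P)%N.
  by rewrite ltnNge; apply: contra Pi => /(nth_default 0) ->.
have [r vi] := v_Some Pi.
by have := jmin (Ordinal i_lt) Pi; rewrite /w vj vi /vge vi.
Qed.

(* Scale [P] so that its coefficients are integral with one of them a unit,
   then round each coefficient to a rational modulo [M_p]. *)
Lemma integral_rational_approx (P : {poly K}) :
  P != 0 -> (forall i, in_Qp v P`_i) ->
  exists c (Q : {poly rat}), [/\ polyOp (c *: P),
    polyMp (c *: P - map_poly ratK Q) & map_poly (redp p) Q != 0].
Proof.
move=> P_nz P_Qp; have [j [m [vj Pm]]] := exists_min_v_coef P_nz.
have approx i : exists q, vge v (P`_i - ratK q) (m + 1) := P_Qp i (m + 1).
pose s i := xchoose (approx i).
have sP i : vge v (P`_i - ratK (s i)) (m + 1) := xchooseP (approx i).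
have vsj : v (ratK (s j)) = Some m := v_perturb vj (sP j).
have sj_nz : s j != 0 by apply/eqP => sj0; move: vsj; rewrite sj0 rmorph0 v0.
pose Q := \poly_(i < size P) (s i / s j).
exists (ratK (s j))^-1, Q; split.
- move=> i; rewrite coefZ; have := vgeM (vge_Some (vV vsj)) (Pm i).
  by rewrite addNr.
- move=> i; rewrite coefB coefZ coef_map coef_poly /=; apply/MpP; exists 1 => //.
  have [i_lt|i_ge] := ltnP i (size P); last first.
    by rewrite nth_default // rmorph0 mulr0 subr0 vge0.
  have := vgeM (sP i) (vge_Some (vV vsj)).
  by rewrite addrAC subrr add0r mulrBl mulrC (fmorph_div ratK).
- apply/negP => /eqP Q0; have := congr1 (fun h : {poly 'F_p} => h`_j) Q0.
  rewrite coef0 coef_map_id0 ?redp0 // coef_poly ltn_ord divff //.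
  by rewrite -[1 : rat]/(1%:~R) redp_int => /eqP; rewrite oner_eq0.
Qed.

Lemma exists_root_res alpha : Op alpha ->
  exists2 h : {poly 'F_p}, h != 0 & root_res v alpha h.
Proof.
move=> Oa; have [y [[P [P_nz [P_Qp Py]]] ay]] := v_dense Kv alpha 1.
have May : Mp (alpha - y) by apply/MpP; exists 1; rewrite ?ltr01.
have Oy : Op y by rewrite -(subKr alpha y); apply: OpB Oa (Mp_Op May).
have [c [Q [OcP McPQ Qb_nz]]] := integral_rational_approx P_nz P_Qp.
have ZQ : polyZp p Q.
  apply/polyZp_Op; rewrite -(subKr (c *: P) (map_poly ratK Q)).
  exact: polyOpB OcP (polyMp_Op McPQ).
exists (map_poly (redp p) Q) => //; rewrite (root_resE Oa (poly_res_redp ZQ)).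
have -> : (map_poly ratK Q).[alpha] =
    ((c *: P).[alpha] - (c *: P).[y]) - (c *: P - map_poly ratK Q).[alpha].
  by rewrite [(c *: P).[y]]hornerZ (rootP Py) mulr0 subr0 hornerD hornerN subKr.
by rewrite MpB ?polyOp_hornerB ?polyMp_horner.
Qed.

Lemma exists_g_spec alpha : Op alpha -> exists g, g_spec p v alpha g.
Proof.
move=> Oa; have [h0 h0_nz h0_root] := exists_root_res Oa.
have [h [[h_nz h_root] h_min]] :=
  @ex_minimal_measure _ (fun h : {poly 'F_p} => h != 0 /\ root_res v alpha h) size
    (ex_intro _ h0 (conj h0_nz h0_root)).
have lc_nz : (lead_coef h)^-1 != 0 by rewrite invr_eq0 lead_coef_eq0.
pose hm := (lead_coef h)^-1 *: h.
have hm_monic : hm \is monic.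
  by apply/monicP; rewrite lead_coefZ mulVf ?lead_coef_eq0.
exists (liftQ hm); split; first exact: polyZp_liftQ.
split; first exact: liftQ_monic.
rewrite redp_liftQ; split=> //; split.
  rewrite (root_resE Oa (poly_resZ (is_res_liftF _) (poly_res_liftF h))) hornerZ.
  exact: MpMr (Op_nat _) h_root.
by move=> h' h'_nz h'_root; rewrite size_scale //; apply: h_min.
Qed.

End PadicField.

Unset Implicit Arguments.

Theorem mainTheorem14 (p : nat) (K : closedFieldType) (v : K -> option rat)
    (alpha : K) (delta : option rat) :
  prime p -> Cp_model p v ->
  vge v alpha 0 ->
  (forall d, delta = Some d -> 0 <= d) ->
  admissible v alpha delta ->
  (delta = Some 0 ->
     forall f : {poly rat},
       (polyZp p f /\ opos (monoval v alpha delta f)) <-> p_ideal p f) /\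
  (delta <> Some 0 ->
     (exists g, g_spec p v alpha g) /\
     forall g, g_spec p v alpha g ->
     forall f : {poly rat},
       (polyZp p f /\ opos (monoval v alpha delta f)) <-> pg_ideal p g f).
Proof.
(* Admissibility only makes v_{alpha,delta} a valuation. *)
move=> p_prime Kv Oa d_ge0 _; split=> [-> f | d_nz].
  split=> [[Zf /(monoval0_pos Kv) /(polyMp_taylor Kv f Oa) Mf] | ].
    exact/(p_idealP p_prime Kv).
  move/(p_idealP p_prime Kv)=> [Zf Mf]; split=> //.
  exact/(monoval0_pos Kv)/(polyMp_taylor Kv f Oa).
have d_gt0 d : delta = Some d -> 0 < d.
  move=> dE; rewrite lt_def d_ge0 // andbT.
  by apply: contra_not_neq d_nz => d0; rewrite dE d0.
have monoval_posE f : polyZp p f ->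
    opos (monoval v alpha delta f) = Mp v (map_poly ratr f).[alpha].
  case: delta d_ge0 d_nz d_gt0 => [d|] _ _ d_gt0 Zf; last by [].
  exact: (monoval_pos p_prime Kv Oa (d_gt0 d erefl) Zf).
split=> [|g gs f]; first exact: exists_g_spec.
split=> [[Zf Mf] | /(pg_idealP p_prime Kv f Oa gs)[Zf Mf]].
  by apply/(pg_idealP p_prime Kv f Oa gs); rewrite -monoval_posE.
by rewrite monoval_posE.
Qed.
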